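(* Let $P$ be a finite poset. The space of functions $\mathcal{J}(P)\to\mathbb{R}$ that are $0$-mesic under rowmotion is equal to $\operatorname{span}_{\mathbb{R}}\{T_A\colon A\in\mathcal{A}(P)\}$.
   Context: $\mathcal{J}(P)$ is the set of order ideals of $P$ and $\mathcal{A}(P)$ the set of antichains (including the empty antichain). Rowmotion $\rho\colon\mathcal{J}(P)\to\mathcal{J}(P)$ sends $I$ to the order ideal generated by the minimal elements of $P\setminus I$. For $A\in\mathcal{A}(P)$ and $I\in\mathcal{J}(P)$: $T_A^+(I)=1$ if $A\subseteq\min(P\setminus I)$, else $0$; $T_A^-(I)=1$ if $A\subseteq\max(I)$, else $0$; $T_A=T_A^+-T_A^-$. A function is $0$-mesic under rowmotion if its average over every rowmotion orbit is $0$. *)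

From HB Require Import structures.
From mathcomp Require Import all_boot all_order all_algebra.
From mathcomp Require Import reals.
Set Implicit Arguments. Unset Strict Implicit. Unset Printing Implicit Defensive.
Import Order.Theory GRing.Theory Num.Theory.

Section Rowmotion.
Variables (d : Order.disp_t) (P : finPOrderType d).

Definition is_ideal (I : {set P}) : bool :=
  [forall x : P, forall y : P, ((x \in I) && (y <= x)%O) ==> (y \in I)].

Definition ideal : finType := {I : {set P} | is_ideal I}.

Definition antichain (A : {set P}) : bool :=
  [forall x in A, forall y in A, (x != y) ==> ~~ (x <= y)%O].

Definition minset (S : {set P}) : {set P} :=
  [set x in S | [forall y in S, ~~ (y < x)%O]].
Definition maxset (S : {set P}) : {set P} :=
  [set x in S | [forall y in S, ~~ (x < y)%O]].

Definition downset (X : {set P}) : {set P} :=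
  [set y | [exists x in X, (y <= x)%O]].

Lemma downset_ideal X : is_ideal (downset X).
Proof.
apply/forallP => x; apply/forallP => y; apply/implyP => /andP [].
rewrite !inE => /existsP [z /andP [zX xz]] yx.
by apply/existsP; exists z; rewrite zX (le_trans yx xz).
Qed.

Definition rowmotion (I : ideal) : ideal :=
  exist _ (downset (minset (~: val I))) (downset_ideal _).

Variable R : realType.
Local Open Scope ring_scope.

Definition TAplus (A : {set P}) (I : ideal) : R :=
  (A \subset minset (~: val I))%:R.
Definition TAminus (A : {set P}) (I : ideal) : R :=
  (A \subset maxset (val I))%:R.
Definition TA (A : {set P}) (I : ideal) : R := TAplus A I - TAminus A I.

Definition zero_mesic (f : ideal -> R) : Prop :=
  forall I : ideal,
    (\sum_(J <- orbit rowmotion I) f J) / (size (orbit rowmotion I))%:R = 0.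

End Rowmotion.

From Pilot Require Import Defs.
From HB Require Import structures.
From mathcomp Require Import all_boot all_order all_algebra.
From mathcomp Require Import reals.
Import Order.Theory GRing.Theory Num.Theory.
Import Defs.

(* Rowmotion is a permutation of J(P), so the 0-mesic functions are exactly
   the coboundaries g \o rho - g.  An order ideal is determined by the
   antichain of its maximal elements, so by Moebius inversion on the subset
   lattice the indicators T_A^- (A an antichain) span all functions on J(P);
   and T_A^+ = T_A^- \o rho because max (rho I) = min (P \ I).  Hence the
   coboundaries are precisely the combinations of T_A = T_A^- \o rho - T_A^-. *)

Set Implicit Arguments.
Unset Strict Implicit.
Unset Printing Implicit Defensive.

Lemma exists_minset_le d (P : finPOrderType d) (S : {set P}) x :
  x \in S -> exists2 y, y \in minset S & (y <= x)%O.
Proof.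
move=> xS; pose below y := [set z in S | (z <= y)%O].
pose Sx y := (y \in S) && (y <= x)%O.
have Sxx : Sx x by rewrite /Sx xS lexx.
case: (arg_minnP (fun y => #|below y|) Sxx) => y /andP[yS yx] ymin.
exists y => //; rewrite inE yS; apply/forall_inP => z zS; apply/negP => zy.
have /ymin : Sx z by rewrite /Sx zS (le_trans (ltW zy) yx).
apply/negP; rewrite -ltnNge; apply/proper_card/properP; split.
  by apply/subsetP => w; rewrite !inE => /andP[-> /le_trans->] //; apply: ltW.
by exists y; rewrite !inE yS ?lexx // (lt_geF zy).
Qed.

Section MinimalElements.
Variables (d : Order.disp_t) (P : finPOrderType d).
Implicit Types (S A : {set P}) (I J : ideal P).

Lemma exists_maxset_ge S x : x \in S -> exists2 y, y \in maxset S & (x <= y)%O.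
Proof. exact: (@exists_minset_le _ P^d). Qed.

Lemma minset_antichain S : antichain (minset S).
Proof.
apply/forall_inP => x; rewrite inE => /andP[xS _].
apply/forall_inP => y; rewrite inE => /andP[_ /forall_inP/(_ x xS) yx].
apply/implyP => neq_xy; apply: contra yx => le_xy.
by rewrite lt_def eq_sym neq_xy.
Qed.

Lemma maxset_antichain S : antichain (maxset S).
Proof.
apply/forall_inP => x; rewrite inE => /andP[_ /forall_inP xmax].
apply/forall_inP => y; rewrite inE => /andP[/xmax xy _].
apply/implyP => neq_xy; apply: contra xy => le_xy.
by rewrite lt_def eq_sym neq_xy.
Qed.

Lemma sub_antichain A S : A \subset S -> antichain S -> antichain A.
Proof.
move=> /subsetP AS /forall_inP antiS.
apply/forall_inP => x /AS/antiS/forall_inP antix.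
by apply/forall_inP => y /AS/antix.
Qed.

Lemma maxset_downset A : antichain A -> maxset (downset A) = A.
Proof.
move=> /forall_inP antiA; apply/setP => x; rewrite inE.
have downA y : y \in A -> y \in downset A.
  by move=> yA; rewrite inE; apply/existsP; exists y; rewrite yA lexx.
apply/andP/idP => [[] | xA].
  rewrite inE => /existsP[z /andP[zA xz]] /forall_inP/(_ z (downA z zA)).
  by rewrite lt_def xz andbT negbK => /eqP<-.
split; first exact: downA.
apply/forall_inP => y; rewrite inE => /existsP[z /andP[zA yz]].
apply/negP => xy; have /forall_inP/(_ z zA) := antiA x xA.
rewrite (le_trans (ltW xy) yz) implybF negbK => /eqP xz.
by move: xy; rewrite xz (le_gtF yz).
Qed.

Lemma downset_maxset I : downset (maxset (val I)) = val I.
Proof.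
apply/setP => x; rewrite inE.
apply/existsP/idP => [[y] | /exists_maxset_ge[y ymax xy]].
  rewrite inE => /andP[/andP[yI _] xy].
  by have /forallP/(_ y)/forallP/(_ x) := valP I; rewrite yI xy.
by exists y; rewrite ymax.
Qed.

Lemma maxset_rowmotion I : maxset (val (rowmotion I)) = minset (~: val I).
Proof. exact/maxset_downset/minset_antichain. Qed.

Lemma minset_compl_subset I J :
  minset (~: val I) = minset (~: val J) -> val J \subset val I.
Proof.
move=> eq_min; apply/subsetP => x xJ; apply/negPn/negP; rewrite -in_setC.
case/exists_minset_le => y; rewrite eq_min !inE => /andP[yJ _] yx.
by have /forallP/(_ x)/forallP/(_ y) := valP J; rewrite xJ yx (negbTE yJ).
Qed.

Lemma rowmotion_inj : injective (@rowmotion d P).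
Proof.
move=> I J /(congr1 (fun K : ideal P => maxset (val K))).
rewrite !maxset_rowmotion => eq_min.
by apply/val_inj/eqP; rewrite eqEsubset !minset_compl_subset ?eq_min.
Qed.

End MinimalElements.

Local Open Scope ring_scope.

Section OrbitSums.
Variables (T : finType) (r : T -> T) (V : zmodType).
Hypothesis r_inj : injective r.

Lemma perm_orbit_map x : perm_eq (map r (orbit r x)) (orbit r x).
Proof.
have uniq_map : uniq (map r (orbit r x)) by rewrite map_inj_uniq ?orbit_uniq.
have sub_orbit : {subset map r (orbit r x) <= orbit r x}.
  by move=> _ /mapP[y yx ->]; apply: mem_orbit.
apply: uniq_perm => //.
by have [] := uniq_min_size uniq_map sub_orbit (eq_leq (esym (size_map r _))).
Qed.

Lemma sum_orbit_coboundary (g : T -> V) x :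
  \sum_(y <- orbit r x) (g (r y) - g y) = 0.
Proof.
by rewrite sumrB -(big_map r xpredT) (perm_big _ (perm_orbit_map x)) subrr.
Qed.

(* The witness g x sums f along the orbit of x, from its root up to but
   excluding x; it vanishes at the root, where the orbit sum is used. *)
Lemma coboundary_of_orbit_sums (f : T -> V) :
  (forall x, \sum_(y <- orbit r x) f y = 0) ->
  exists g : T -> V, forall x, f x = g (r x) - g x.
Proof.
move=> orbit0.
pose g x := \sum_(y <- traject r (froot r x) (findex r (froot r x) x)) f y.
exists g => x.
have root_r : froot r (r x) = froot r x.
  by apply/esym/(fingraph.rootP (fconnect_sym r_inj))/fconnect1.
set z := froot r x.
have zx : fconnect r z x by rewrite fconnect_sym //; apply: connect_root.
have r_x : r x = iter (findex r z x).+1 r z by rewrite iterS iter_findex.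
have gSx : g (r x) = \sum_(y <- traject r z (findex r z x).+1) f y.
  rewrite /g root_r -/z r_x.
  case: (ltngtP (findex r z x).+1 (order r z)) => [lt_n | | eq_n].
  - by rewrite findex_iter.
  - by rewrite ltnNge findex_max.
  by rewrite eq_n iter_order // findex0 big_nil; symmetry; apply: orbit0.
by rewrite gSx trajectSr big_rcons /= iter_findex // addrC addrK.
Qed.

End OrbitSums.

Section SubsetSums.
Variables (T : finType) (V : zmodType).

Lemma exists_subset_sum (h : {set T} -> V) :
  exists c : {set T} -> V,
    forall M : {set T}, h M = \sum_(A : {set T} | A \subset M) c A.
Proof.
suff [c Hc] : exists c : {set T} -> V,
    forall M : {set T}, (#|M| < #|T|.+1)%N ->
    h M = \sum_(A : {set T} | A \subset M) c A.
  by exists c => M; rewrite Hc // ltnS max_card.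
elim: #|T|.+1 => [|n [c Hc]]; first by exists (fun=> 0).
pose dc (A : {set T}) :=
  if #|A| == n then h A - \sum_(B : {set T} | B \subset A) c B else 0.
have dc0 (A : {set T}) : (#|A| < n)%N -> dc A = 0.
  by move=> ltAn; rewrite /dc ltn_eqF.
exists (fun A => c A + dc A) => M; rewrite ltnS leq_eqVlt big_split /=.
case/orP => [/eqP eqMn | ltMn].
  rewrite [X in _ + X](bigD1 M) //= [X in _ + (_ + X)]big1.
    by rewrite addr0 /dc eqMn eqxx addrC subrK.
  move=> A /andP[AM nAM].
  by rewrite dc0 // -eqMn proper_card // properEneq nAM.
rewrite [X in _ + X]big1 ?addr0 => [|A AM]; first exact: Hc.
by rewrite dc0 // (leq_ltn_trans (subset_leq_card AM)).
Qed.

End SubsetSums.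

Section RowmotionToggles.
Variables (d : Order.disp_t) (P : finPOrderType d) (R : realType).
Local Notation rho := (@rowmotion d P).

Definition TAminus_comb (c : {set P} -> R) (I : ideal P) : R :=
  \sum_(A | antichain A) c A * TAminus R A I.

Lemma TAminus_span (g : ideal P -> R) :
  exists c : {set P} -> R, g =1 TAminus_comb c.
Proof.
pose ideal_of M : ideal P := exist _ (downset M) (downset_ideal M).
have [c Hc] := exists_subset_sum (g \o ideal_of).
exists c => I.
have -> : g I = \sum_(A : {set P} | A \subset maxset (val I)) c A.
  by rewrite -Hc /=; congr g; apply/val_inj/esym/downset_maxset.
rewrite /TAminus_comb big_mkcond [RHS]big_mkcond /=.
apply: eq_bigr => A _; rewrite /TAminus.
have [AM | _] := boolP (A \subset maxset (val I)).
  by rewrite (sub_antichain AM (maxset_antichain _)) mulr1.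
by case: (antichain A); rewrite ?mulr0.
Qed.

Lemma TAplus_rowmotion A I : TAplus R A I = TAminus R A (rho I).
Proof. by rewrite /TAminus maxset_rowmotion. Qed.

Lemma TA_comb_coboundary (c : {set P} -> R) I :
  \sum_(A | antichain A) c A * TA R A I =
  TAminus_comb c (rho I) - TAminus_comb c I.
Proof.
by rewrite -sumrB; apply: eq_bigr => A _; rewrite -mulrBr /TA TAplus_rowmotion.
Qed.

Lemma zero_mesicE (f : ideal P -> R) :
  zero_mesic f <-> forall I, \sum_(J <- orbit rho I) f J = 0.
Proof.
have mean0 I : (\sum_(J <- orbit rho I) f J) / (size (orbit rho I))%:R = 0 <->
    \sum_(J <- orbit rho I) f J = 0.
  have size_neq0 : (size (orbit rho I))%:R != 0 :> R.
    by rewrite pnatr_eq0 size_orbit -lt0n order_gt0.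
  split=> [/eqP | ->]; last exact: mul0r.
  by rewrite mulf_eq0 invr_eq0 (negbTE size_neq0) orbF => /eqP.
by split=> f0 I; apply/mean0.
Qed.

End RowmotionToggles.

Theorem theorem6p2 (d : Order.disp_t) (P : finPOrderType d) (R : realType)
    (f : ideal P -> R) :
  zero_mesic f <->
  exists c : {set P} -> R,
    forall I : ideal P, f I = \sum_(A : {set P} | antichain A) c A * TA R A I.
Proof.
rewrite zero_mesicE; split.
  move=> /(coboundary_of_orbit_sums (@rowmotion_inj d P)) [g fg].
  have [c gc] := TAminus_span g.
  by exists c => I; rewrite TA_comb_coboundary fg !gc.
case=> c fc I; under eq_bigr => J _ do rewrite fc TA_comb_coboundary.
exact/sum_orbit_coboundary/rowmotion_inj.
Qed.
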